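(* Let $0<\alpha<\pi/4$ and $0<\beta\le\pi/4$, and consider the system on $S^2$ described in the context. Let $(x,\lambda)$ be a normal bang-bang extremal pair with $x(0)=N=(0,0,1)$, and let $s$, $s+t_1$, $s+t_1+t_2$ (with $t_1,t_2>0$) be three consecutive switching times. Then $(t_1,t_2)\in[0,\pi]^2$.
   Context: The system is $\dot x=Fx+u_1G_1x+u_2G_2x$ on the unit sphere $S^2\subset\mathbb R^3$, measurable controls $|u_i|\le1$, with $F=\cos\alpha\begin{pmatrix}0&-1&0\\1&0&0\\0&0&0\end{pmatrix}$, $G_1=\sin\alpha\sin\beta\begin{pmatrix}0&0&0\\0&0&-1\\0&1&0\end{pmatrix}$, $G_2=\sin\alpha\cos\beta\begin{pmatrix}0&0&-1\\0&0&0\\1&0&0\end{pmatrix}$. An extremal pair: trajectory $x$ with control $u$, Lipschitz row vector $\lambda(t)\in\mathbb R^3$ with $\lambda(t)\cdot x(t)=0$, $\lambda(t)\ne0$, and constant $\lambda_0\le0$, such that a.e. $\dot\lambda=-\lambda(F+u_1G_1+u_2G_2)$, $u(t)$ maximizes $\lambda Fx+u_1\lambda G_1x+u_2\lambda G_2x+\lambda_0$ over $[-1,1]^2$, and the maximum is $0$; normal if $\lambda_0<0$. Bang-bang: finitely many arcs on which $u$ is a.e. constant in $\{-1,1\}^2$; a switching time is a time at which $u_1$ or $u_2$ changes between $+1$ and $-1$. *)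

From Stdlib Require Import Reals Lra.
Open Scope R_scope.

(* Vectors of R^3 are functions nat -> R (components 0,1,2);
   3x3 matrices are functions nat -> nat -> R. *)
Definition vec3 := nat -> R.
Definition mat3 := nat -> nat -> R.

Definition matvec (M : mat3) (x : vec3) : vec3 :=
  fun i => M i 0%nat * x 0%nat + M i 1%nat * x 1%nat + M i 2%nat * x 2%nat.

Definition rowmat (l : vec3) (M : mat3) : vec3 :=
  fun j => l 0%nat * M 0%nat j + l 1%nat * M 1%nat j + l 2%nat * M 2%nat j.

Definition dot (l x : vec3) : R :=
  l 0%nat * x 0%nat + l 1%nat * x 1%nat + l 2%nat * x 2%nat.

Definition vnonzero (l : vec3) : Prop :=
  l 0%nat <> 0 \/ l 1%nat <> 0 \/ l 2%nat <> 0.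

Definition Fm (a : R) : mat3 := fun i j =>
  cos a * (match i, j with
           | 0%nat, 1%nat => -1
           | 1%nat, 0%nat => 1
           | _, _ => 0 end).

Definition G1m (a b : R) : mat3 := fun i j =>
  sin a * sin b * (match i, j with
                   | 1%nat, 2%nat => -1
                   | 2%nat, 1%nat => 1
                   | _, _ => 0 end).

Definition G2m (a b : R) : mat3 := fun i j =>
  sin a * cos b * (match i, j with
                   | 0%nat, 2%nat => -1
                   | 2%nat, 0%nat => 1
                   | _, _ => 0 end).

Definition Am (a b v1 v2 : R) : mat3 := fun i j =>
  Fm a i j + v1 * G1m a b i j + v2 * G2m a b i j.

Definition Ham (a b : R) (l x : vec3) (lam0 v1 v2 : R) : R :=
  dot l (matvec (Fm a) x) + v1 * dot l (matvec (G1m a b) x)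
  + v2 * dot l (matvec (G2m a b) x) + lam0.

Definition is_sign (c : R) : Prop := c = 1 \/ c = -1.

(* Bang-bang control on [0,T]: finitely many arcs (tau i, tau (i+1)),
   i < n, covering [0,T], on each of which (u1,u2) is constant with values
   in {-1,1}^2.  The pointwise representative of the control is taken
   constant on each open arc (its values at the finitely many junction
   points are only required to satisfy |u_i| <= 1). *)
Definition bang_bang_partition (T : R) (u1 u2 : R -> R)
  (n : nat) (tau : nat -> R) (c1 c2 : nat -> R) : Prop :=
  (0 < n)%nat /\ tau 0%nat = 0 /\ tau n = T /\
  (forall i, (i < n)%nat -> tau i < tau (S i)) /\
  (forall i, (i < n)%nat -> is_sign (c1 i) /\ is_sign (c2 i)) /\
  (forall i t, (i < n)%nat -> tau i < t < tau (S i) ->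
       u1 t = c1 i /\ u2 t = c2 i).

(* Normal bang-bang extremal pair (x, lam) on [0,T] with control (u1,u2)
   and constant multiplier lam0 < 0.  On each open arc the control is
   constant, so the (absolutely continuous / Lipschitz) x and lam are
   smooth there; the differential equations and the maximum condition are
   required on the open arcs (i.e. everywhere except at finitely many
   points, hence a.e.). *)
Definition normal_bang_bang_extremal (a b T : R) (x : R -> vec3)
  (u1 u2 : R -> R) (lam : R -> vec3) (lam0 : R) : Prop :=
  0 < T /\
  lam0 < 0 /\
  (forall t, 0 <= t <= T -> -1 <= u1 t <= 1 /\ -1 <= u2 t <= 1) /\
  (exists n tau c1 c2,
     bang_bang_partition T u1 u2 n tau c1 c2 /\
     (forall i t, (i < n)%nat -> tau i < t < tau (S i) ->
        (forall k, (k < 3)%nat ->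
           derivable_pt_lim (fun s => x s k) t
             (matvec (Am a b (u1 t) (u2 t)) (x t) k)) /\
        (forall k, (k < 3)%nat ->
           derivable_pt_lim (fun s => lam s k) t
             (- rowmat (lam t) (Am a b (u1 t) (u2 t)) k)) /\
        (forall v1 v2, -1 <= v1 <= 1 -> -1 <= v2 <= 1 ->
           Ham a b (lam t) (x t) lam0 v1 v2
             <= Ham a b (lam t) (x t) lam0 (u1 t) (u2 t)) /\
        Ham a b (lam t) (x t) lam0 (u1 t) (u2 t) = 0)) /\
  (forall k, (k < 3)%nat -> forall t, 0 <= t <= T ->
       continuity_pt (fun s => x s k) t) /\
  (forall t, 0 <= t <= T -> dot (x t) (x t) = 1) /\
  (exists K, forall k, (k < 3)%nat -> forall t s, 0 <= t <= T -> 0 <= s <= T ->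
       Rabs (lam t k - lam s k) <= K * Rabs (t - s)) /\
  (forall t, 0 <= t <= T -> dot (lam t) (x t) = 0 /\ vnonzero (lam t)).

Definition switching_time (T : R) (u1 u2 : R -> R) (t : R) : Prop :=
  exists eps, 0 < eps /\ 0 <= t - eps /\ t + eps <= T /\
  exists a1 a2 b1 b2,
    is_sign a1 /\ is_sign a2 /\ is_sign b1 /\ is_sign b2 /\
    (a1 <> b1 \/ a2 <> b2) /\
    (forall r, t - eps < r < t -> u1 r = a1 /\ u2 r = a2) /\
    (forall r, t < r < t + eps -> u1 r = b1 /\ u2 r = b2).

Definition northpole : vec3 := fun i => match i with 2%nat => 1 | _ => 0 end.

From Stdlib Require Import Reals Lra Lia Nsatz.
Open Scope R_scope.

(* On a bang arc the state [x] and the costate [lam] rotate with unit speed about one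
   unit axis [w] fixed by the control, hence so does [M = x × lam]. Up to sign, the first
   two components of [M] are the switching functions, and the maximum condition gives
   [w . M = - lam0]. The norm [|M| = |lam(0)|] is conserved, and since [x(0)] is the north
   pole, Cauchy-Schwarz gives [lam0² <= sin² α |lam(0)|²]. Between consecutive switches the
   control is constant and [M] runs on a circle about [w] whose radius exceeds its height
   [|lam0|], because [sin² α < 1/2]; over a half turn of such a circle one of the two
   switching functions must change sign, so consecutive switches are at most π apart. *)

(** * Continuity and piecewise differentiable functions *)

Lemma derivable_pt_lim_val (f : R -> R) (t l l' : R) :
  derivable_pt_lim f t l -> l = l' -> derivable_pt_lim f t l'.
Proof. now intros H <-. Qed.

Lemma continuity_pt_nonneg_right (g : R -> R) (r d : R) :
  0 < d -> continuity_pt g r -> (forall z, r < z < r + d -> 0 <= g z) -> 0 <= g r.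
Proof.
  intros Hd Hc Hg. apply Rnot_lt_le; intros Hneg.
  destruct (Hc (- g r) ltac:(lra)) as [e [He Hball]].
  assert (0 < Rmin e d) by (apply Rmin_pos; lra).
  pose proof (Rmin_l e d). pose proof (Rmin_r e d).
  set (z := r + Rmin e d / 2).
  assert (Hz : R_dist (g z) (g r) < - g r).
  { apply Hball. split; [split; [exact I | unfold z; lra] |].
    simpl; unfold R_dist, z. rewrite Rabs_right; lra. }
  specialize (Hg z ltac:(unfold z; lra)).
  simpl in Hz; unfold R_dist in Hz. rewrite Rabs_right in Hz; lra.
Qed.

Lemma continuity_pt_eq_right (g : R -> R) (r d c : R) :
  0 < d -> continuity_pt g r -> (forall z, r < z < r + d -> g z = c) -> g r = c.
Proof.
  intros Hd Hc Hg.
  assert (Hcc : continuity_pt (fun _ => c) r) by (apply continuity_pt_const; now intros ? ?).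
  assert (0 <= g r - c).
  { apply (continuity_pt_nonneg_right (fun s => g s - c) r d Hd).
    - now apply continuity_pt_minus.
    - intros z Hz. rewrite Hg; lra. }
  assert (0 <= c - g r).
  { apply (continuity_pt_nonneg_right (fun s => c - g s) r d Hd).
    - now apply continuity_pt_minus.
    - intros z Hz. rewrite Hg; lra. }
  lra.
Qed.

Definition clamp (T t : R) : R := Rmin T (Rmax 0 t).

Lemma clamp_id (T t : R) : 0 <= t <= T -> clamp T t = t.
Proof. intros H. unfold clamp, Rmin, Rmax. repeat destruct Rle_dec; lra. Qed.

Lemma lipschitz_clamp_continuous (T K : R) (f : R -> R) : 0 <= T ->
  (forall t s, 0 <= t <= T -> 0 <= s <= T -> Rabs (f t - f s) <= K * Rabs (t - s)) ->
  forall t, continuity_pt (fun s => f (clamp T s)) t.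
Proof.
  intros HT HK t eps Heps.
  assert (Hrange : forall u, 0 <= clamp T u <= T).
  { intros u. unfold clamp, Rmin, Rmax. repeat destruct Rle_dec; lra. }
  assert (Hcontr : forall z, Rabs (clamp T z - clamp T t) <= Rabs (z - t)).
  { intros z. unfold clamp, Rmin, Rmax. repeat destruct Rle_dec; split_Rabs; lra. }
  pose proof (Rabs_pos K) as HK0.
  exists (eps / (Rabs K + 1)). split; [apply Rdiv_lt_0_compat; lra |].
  intros z [_ Hz]. simpl in *. unfold R_dist in *.
  assert (Hlt : Rabs K * (eps / (Rabs K + 1)) < eps).
  { apply (Rmult_lt_reg_r (Rabs K + 1)); [lra |]. field_simplify; lra. }
  eapply Rle_lt_trans; [apply HK; apply Hrange |].
  eapply Rle_lt_trans; [apply Rmult_le_compat_r; [apply Rabs_pos | apply Rle_abs] |].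
  eapply Rle_lt_trans; [apply Rmult_le_compat_l; [apply HK0 | apply Hcontr] |].
  eapply Rle_lt_trans; [apply Rmult_le_compat_l; [apply HK0 | left; apply Hz] | exact Hlt].
Qed.

Lemma null_derivative_on (g : R -> R) (a b : R) : a <= b ->
  (forall t, a <= t <= b -> continuity_pt g t) ->
  (forall t, a < t < b -> derivable_pt_lim g t 0) -> g b = g a.
Proof.
  intros Hab Hc Hd.
  assert (pr : forall t, a < t < b -> derivable_pt g t) by (intros t Ht; exists 0; now apply Hd).
  apply (null_derivative_loc g a b pr Hc); [| lra].
  intros t Ht. apply derive_pt_eq_0, Hd, Ht.
Qed.

Lemma partition_locate (n : nat) (tau : nat -> R) (r : R) :
  tau 0%nat <= r -> r < tau n -> exists k, (k < n)%nat /\ tau k <= r < tau (S k).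
Proof.
  intros H0. induction n as [|n IH]; intros Hn; [lra |].
  destruct (Rlt_or_le r (tau n)) as [Hl | Hl].
  - destruct (IH Hl) as [k [Hk Hr]]. exists k; split; [lia | auto].
  - exists n; split; [lia | lra].
Qed.

Lemma partition_mono (n : nat) (tau : nat -> R) :
  (forall i, (i < n)%nat -> tau i < tau (S i)) ->
  forall i j, (i <= j <= n)%nat -> tau i <= tau j.
Proof.
  intros Hinc i j [Hij Hjn]. induction Hij as [| j Hij IH]; [lra |].
  specialize (IH ltac:(lia)). specialize (Hinc j ltac:(lia)). lra.
Qed.

Lemma piecewise_null_derivative (n : nat) (tau : nat -> R) (g : R -> R) (a b : R) :
  tau 0%nat <= a -> a <= b -> b <= tau n ->
  (forall t, a <= t <= b -> continuity_pt g t) ->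
  (forall i t, (i < n)%nat -> tau i < t < tau (S i) -> a < t < b -> derivable_pt_lim g t 0) ->
  g b = g a.
Proof.
  intros H0 Hab Hbn Hc Hd.
  assert (Hk : forall k, (k <= n)%nat -> forall t, a <= t <= b -> t <= tau k -> g t = g a).
  { induction k as [| k IH]; intros Hkn t Ht Htk; [replace t with a by lra; reflexivity |].
    destruct (Rle_or_lt t (tau k)) as [Hle | Hlt]; [apply IH; auto; lia |].
    pose proof (Rmax_l a (tau k)). pose proof (Rmax_r a (tau k)).
    set (a' := Rmax a (tau k)) in *.
    assert (Ha' : g a' = g a).
    { unfold a', Rmax. destruct Rle_dec; [apply IH; lia || lra | reflexivity]. }
    rewrite <- Ha'. apply null_derivative_on.
    - apply Rmax_lub; lra.
    - intros z Hz. apply Hc. lra.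
    - intros z Hz. apply (Hd k); [lia | lra | lra]. }
  apply (Hk n); [lia | lra | lra].
Qed.

Lemma piecewise_nonneg (n : nat) (tau : nat -> R) (g : R -> R) (a b : R) :
  tau 0%nat <= a -> b <= tau n ->
  (forall t, a < t < b -> continuity_pt g t) ->
  (forall i t, (i < n)%nat -> tau i < t < tau (S i) -> a < t < b -> 0 <= g t) ->
  forall t, a < t < b -> 0 <= g t.
Proof.
  intros H0 Hbn Hc Hg t Ht.
  destruct (partition_locate n tau t) as (k & Hk & Hkt); [lra | lra |].
  pose proof (Rmin_l (tau (S k)) b). pose proof (Rmin_r (tau (S k)) b).
  set (e := Rmin (tau (S k)) b) in *.
  assert (t < e) by (apply Rmin_glb_lt; lra).
  apply (continuity_pt_nonneg_right g t (e - t)); [lra | apply Hc, Ht |].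
  intros z Hz. apply (Hg k); auto; lra.
Qed.

Lemma partition_switching_time (T : R) (u1 u2 : R -> R) (n : nat) (tau c1 c2 : nat -> R) (k : nat) :
  bang_bang_partition T u1 u2 n tau c1 c2 -> (S k < n)%nat ->
  c1 k <> c1 (S k) \/ c2 k <> c2 (S k) -> switching_time T u1 u2 (tau (S k)).
Proof.
  intros (Hn & Ht0 & HtN & Hinc & Hsig & Hctl) Hk Hneq.
  assert (tau 0%nat <= tau k) by (apply (partition_mono n); auto; lia).
  assert (tau (S (S k)) <= tau n) by (apply (partition_mono n); auto; lia).
  pose proof (Hinc k ltac:(lia)). pose proof (Hinc (S k) Hk).
  pose proof (Rmin_l (tau (S k) - tau k) (tau (S (S k)) - tau (S k))).
  pose proof (Rmin_r (tau (S k) - tau k) (tau (S (S k)) - tau (S k))).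
  set (e := Rmin (tau (S k) - tau k) (tau (S (S k)) - tau (S k))) in *.
  assert (0 < e) by (apply Rmin_pos; lra).
  exists e. split; [lra | split; [lra | split; [lra |]]].
  exists (c1 k), (c2 k), (c1 (S k)), (c2 (S k)).
  destruct (Hsig k ltac:(lia)), (Hsig (S k) Hk).
  repeat split; auto; apply Hctl; lia || lra.
Qed.

Lemma control_constant_between_switches (T : R) (u1 u2 : R -> R) (n : nat)
  (tau c1 c2 : nat -> R) (s0 L : R) :
  bang_bang_partition T u1 u2 n tau c1 c2 -> switching_time T u1 u2 s0 ->
  (forall r, s0 < r < s0 + L -> ~ switching_time T u1 u2 r) ->
  exists b1 b2, is_sign b1 /\ is_sign b2 /\
    forall k t, (k < n)%nat -> tau k < t < tau (S k) -> s0 < t < s0 + L ->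
      c1 k = b1 /\ c2 k = b2.
Proof.
  intros Hpart Hs Hno. pose proof Hpart as (Hn & Ht0 & HtN & Hinc & Hsig & Hctl).
  destruct Hs as (e & He & He0 & _ & a1 & a2 & b1 & b2 & _ & _ & Hb1 & Hb2 & _ & _ & Hright).
  exists b1, b2. split; [exact Hb1 | split; [exact Hb2 |]].
  assert (Hfirst : forall k, (k < n)%nat -> tau k <= s0 < tau (S k) -> c1 k = b1 /\ c2 k = b2).
  { intros k Hk Hks.
    pose proof (Rmin_l (s0 + e) (tau (S k))). pose proof (Rmin_r (s0 + e) (tau (S k))).
    set (m := Rmin (s0 + e) (tau (S k))) in *.
    assert (s0 < m) by (apply Rmin_glb_lt; lra).
    destruct (Hright ((s0 + m) / 2)) as [E1 E2]; [lra |].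
    destruct (Hctl k ((s0 + m) / 2) Hk) as [F1 F2]; [lra |].
    split; congruence. }
  induction k as [| k IH]; intros t Hk Ht Hst; [apply Hfirst; auto; lra |].
  destruct (Rle_or_lt (tau (S k)) s0) as [Hle | Hlt]; [apply Hfirst; auto; lra |].
  pose proof (Hinc k ltac:(lia)).
  pose proof (Rmax_l s0 (tau k)). pose proof (Rmax_r s0 (tau k)).
  set (m := Rmax s0 (tau k)) in *.
  assert (m < tau (S k)) by (apply Rmax_lub_lt; lra).
  destruct (IH ((m + tau (S k)) / 2)) as [I1 I2]; [lia | lra | lra |].
  destruct (Req_dec (c1 k) (c1 (S k))), (Req_dec (c2 k) (c2 (S k)));
    [split; congruence | ..];
    exfalso; apply (Hno (tau (S k))); try lra;
    apply (partition_switching_time T u1 u2 n tau c1 c2 k); auto.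
Qed.

Definition cross (u v : vec3) : vec3 := fun k =>
  match k with
  | 0%nat => u 1%nat * v 2%nat - u 2%nat * v 1%nat
  | 1%nat => u 2%nat * v 0%nat - u 0%nat * v 2%nat
  | _ => u 0%nat * v 1%nat - u 1%nat * v 0%nat
  end.

Definition vsub (u v : vec3) : vec3 := fun k => u k - v k.

Definition rodrigues (w m : vec3) (th : R) : vec3 := fun k =>
  dot w m * w k + cos th * (m k - dot w m * w k) + sin th * cross w m k.

Definition vderiv (f : R -> vec3) (t : R) (df : vec3) : Prop :=
  forall k, (k < 3)%nat -> derivable_pt_lim (fun s => f s k) t (df k).

Definition vcont (f : R -> vec3) (t : R) : Prop :=
  forall k, (k < 3)%nat -> continuity_pt (fun s => f s k) t.

Lemma lagrange_identity (u v : vec3) :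
  dot (cross u v) (cross u v) = dot u u * dot v v - dot u v * dot u v.
Proof. unfold dot, cross. ring. Qed.

Lemma cross_derivation (w u v : vec3) (k : nat) : (k < 3)%nat ->
  cross (cross w u) v k + cross u (cross w v) k = cross w (cross u v) k.
Proof. intros Hk. destruct k as [| [| [| k]]]; [..| lia]; unfold cross; ring. Qed.

Lemma dot_self_eq0 (v : vec3) : dot v v = 0 -> forall k, (k < 3)%nat -> v k = 0.
Proof.
  unfold dot. intros H k Hk.
  pose proof (Rle_0_sqr (v 0%nat)). pose proof (Rle_0_sqr (v 1%nat)).
  pose proof (Rle_0_sqr (v 2%nat)).
  unfold Rsqr in *.
  destruct k as [| [| [| k]]]; [..| lia]; apply Rsqr_0_uniq; unfold Rsqr; lra.
Qed.

Lemma vnonzero_dot_pos (v : vec3) : vnonzero v -> 0 < dot v v.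
Proof.
  unfold dot. intros Hv.
  pose proof (Rle_0_sqr (v 0%nat)). pose proof (Rle_0_sqr (v 1%nat)).
  pose proof (Rle_0_sqr (v 2%nat)).
  destruct Hv as [Hv | [Hv | Hv]]; pose proof (Rsqr_pos_lt _ Hv); unfold Rsqr in *; lra.
Qed.

Lemma rodrigues_0 (w m : vec3) (k : nat) : rodrigues w m 0 k = m k.
Proof. unfold rodrigues. rewrite cos_0, sin_0. ring. Qed.

Lemma vderiv_val (f : R -> vec3) (t : R) (df df' : vec3) :
  vderiv f t df -> (forall k, (k < 3)%nat -> df k = df' k) -> vderiv f t df'.
Proof. intros Hf E k Hk. rewrite <- E by exact Hk. now apply Hf. Qed.

Lemma vcont_of_vderiv (f : R -> vec3) (t : R) (df : vec3) : vderiv f t df -> vcont f t.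
Proof. intros Hf k Hk. apply derivable_continuous_pt. exists (df k). now apply Hf. Qed.

Lemma derivable_pt_lim_dot (f g : R -> vec3) (t : R) (df dg : vec3) :
  vderiv f t df -> vderiv g t dg ->
  derivable_pt_lim (fun s => dot (f s) (g s)) t (dot df (g t) + dot (f t) dg).
Proof.
  intros Hf Hg. unfold dot. eapply derivable_pt_lim_val.
  - repeat apply derivable_pt_lim_plus;
      apply derivable_pt_lim_mult; (apply Hf || apply Hg); lia.
  - cbv beta. ring.
Qed.

Lemma continuity_pt_dot (f g : R -> vec3) (t : R) :
  vcont f t -> vcont g t -> continuity_pt (fun s => dot (f s) (g s)) t.
Proof.
  intros Hf Hg. unfold dot.
  repeat apply continuity_pt_plus; apply continuity_pt_mult; (apply Hf || apply Hg); lia.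
Qed.

Lemma continuity_pt_dot_l (v : vec3) (f : R -> vec3) (t : R) :
  vcont f t -> continuity_pt (fun s => dot v (f s)) t.
Proof.
  intros Hf. apply (continuity_pt_dot (fun _ => v)); [| exact Hf].
  intros k Hk. apply continuity_pt_const. now intros ? ?.
Qed.

Lemma vderiv_cross (f g : R -> vec3) (t : R) (df dg : vec3) :
  vderiv f t df -> vderiv g t dg ->
  vderiv (fun s => cross (f s) (g s)) t (fun k => cross df (g t) k + cross (f t) dg k).
Proof.
  intros Hf Hg k Hk.
  destruct k as [| [| [| k]]]; [..| lia]; unfold cross; eapply derivable_pt_lim_val;
    try (apply derivable_pt_lim_minus; apply derivable_pt_lim_mult; (apply Hf || apply Hg); lia);
    cbv beta; ring.
Qed.

Lemma vcont_cross (f g : R -> vec3) (t : R) :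
  vcont f t -> vcont g t -> vcont (fun s => cross (f s) (g s)) t.
Proof.
  intros Hf Hg k Hk.
  destruct k as [| [| [| k]]]; [..| lia]; unfold cross;
    apply continuity_pt_minus; apply continuity_pt_mult; (apply Hf || apply Hg); lia.
Qed.

Lemma vderiv_sub (f g : R -> vec3) (t : R) (df dg : vec3) :
  vderiv f t df -> vderiv g t dg -> vderiv (fun s => vsub (f s) (g s)) t (vsub df dg).
Proof. intros Hf Hg k Hk. apply derivable_pt_lim_minus; auto. Qed.

Lemma vcont_sub (f g : R -> vec3) (t : R) :
  vcont f t -> vcont g t -> vcont (fun s => vsub (f s) (g s)) t.
Proof. intros Hf Hg k Hk. apply continuity_pt_minus; auto. Qed.

Lemma derivable_pt_lim_cos_shift (c t : R) :
  derivable_pt_lim (fun s => cos (s - c)) t (- sin (t - c)).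
Proof.
  eapply derivable_pt_lim_val.
  - apply (derivable_pt_lim_comp (fun s => s - c) cos).
    + apply derivable_pt_lim_minus; [apply derivable_pt_lim_id | apply derivable_pt_lim_const].
    + apply derivable_pt_lim_cos.
  - ring.
Qed.

Lemma derivable_pt_lim_sin_shift (c t : R) :
  derivable_pt_lim (fun s => sin (s - c)) t (cos (t - c)).
Proof.
  eapply derivable_pt_lim_val.
  - apply (derivable_pt_lim_comp (fun s => s - c) sin).
    + apply derivable_pt_lim_minus; [apply derivable_pt_lim_id | apply derivable_pt_lim_const].
    + apply derivable_pt_lim_sin.
  - ring.
Qed.

Lemma cross_rodrigues (w m : vec3) (th : R) (k : nat) : dot w w = 1 -> (k < 3)%nat ->
  cross w (rodrigues w m th) k = - sin th * (m k - dot w m * w k) + cos th * cross w m k.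
Proof.
  unfold dot. intros Hw Hk.
  destruct k as [| [| [| k]]]; [..| lia]; unfold rodrigues, cross, dot; clear Hk; nsatz.
Qed.

Lemma vderiv_rodrigues (w m : vec3) (c t : R) : dot w w = 1 ->
  vderiv (fun s => rodrigues w m (s - c)) t (cross w (rodrigues w m (t - c))).
Proof.
  intros Hw k Hk. rewrite cross_rodrigues by assumption. unfold rodrigues.
  eapply derivable_pt_lim_val.
  - apply derivable_pt_lim_plus; [apply derivable_pt_lim_plus |];
      [apply derivable_pt_lim_const | ..]; apply derivable_pt_lim_mult;
      try apply derivable_pt_lim_const;
      [apply derivable_pt_lim_cos_shift | apply derivable_pt_lim_sin_shift].
  - cbv beta. ring.
Qed.

Lemma piecewise_rotation_norm (n : nat) (tau : nat -> R) (w : nat -> vec3)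
  (f : R -> vec3) (a b : R) :
  tau 0%nat <= a -> a <= b -> b <= tau n ->
  (forall t, a <= t <= b -> vcont f t) ->
  (forall i t, (i < n)%nat -> tau i < t < tau (S i) -> a < t < b ->
     vderiv f t (cross (w i) (f t))) ->
  dot (f b) (f b) = dot (f a) (f a).
Proof.
  intros H0 Hab Hbn Hc Hd.
  apply (piecewise_null_derivative n tau (fun s => dot (f s) (f s))); auto.
  - intros t Ht. apply continuity_pt_dot; auto.
  - intros i t Hi Ht Hat. eapply derivable_pt_lim_val.
    + apply derivable_pt_lim_dot; apply (Hd i); auto.
    + unfold dot, cross. ring.
Qed.

Lemma piecewise_rotation_rodrigues (n : nat) (tau : nat -> R) (w : vec3)
  (M : R -> vec3) (c d : R) :
  dot w w = 1 -> tau 0%nat <= c -> c <= d -> d <= tau n ->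
  (forall t, c <= t <= d -> vcont M t) ->
  (forall i t, (i < n)%nat -> tau i < t < tau (S i) -> c < t < d ->
     vderiv M t (cross w (M t))) ->
  forall t, c <= t <= d -> forall k, (k < 3)%nat -> M t k = rodrigues w (M c) (t - c) k.
Proof.
  intros Hw H0 Hcd Hdn Hc Hd t Ht k Hk.
  set (E := fun s => vsub (M s) (rodrigues w (M c) (s - c))).
  assert (HE : dot (E t) (E t) = dot (E c) (E c)).
  { apply (piecewise_rotation_norm n tau (fun _ => w) E c t); try lra.
    - intros s Hs. apply vcont_sub; [apply Hc; lra |].
      eapply vcont_of_vderiv, vderiv_rodrigues, Hw.
    - intros i s Hi Hs Hcs. eapply vderiv_val.
      + apply vderiv_sub; [apply (Hd i); auto; lra | apply vderiv_rodrigues, Hw].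
      + intros j Hj. unfold E, vsub, cross. destruct j as [| [| [| j]]]; [..| lia]; ring. }
  assert (HEc : dot (E c) (E c) = 0).
  { unfold E, vsub, dot. rewrite Rminus_diag, !rodrigues_0. ring. }
  pose proof (dot_self_eq0 (E t) ltac:(lra) k Hk) as Hz.
  unfold E, vsub in Hz. lra.
Qed.

(** * Sinusoids over a half period *)

Lemma sinusoid_nonneg_half_period (c A B : R) : A < 0 ->
  (forall th, 0 <= th <= PI -> 0 <= c + B * cos th + A * sin th) ->
  A * A + B * B <= c * c.
Proof.
  intros HA Hall.
  set (K := sqrt (A * A + B * B)).
  assert (HK2 : K * K = A * A + B * B) by (apply sqrt_sqrt; nra).
  assert (HK : 0 < K) by (apply sqrt_lt_R0; nra).
  assert (HBK : - K <= B <= K) by nra.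
  assert (Hb : -1 <= - B / K <= 1).
  { split; apply (Rmult_le_reg_r K); try lra; unfold Rdiv;
      rewrite Rmult_assoc, Rinv_l; lra. }
  (* the angle at which the sinusoid attains its minimum [c - K] *)
  set (th := acos (- B / K)).
  assert (Hcos : cos th = - B / K) by (apply cos_acos, Hb).
  assert (Hsin : sin th = - A / K).
  { unfold th. rewrite sin_acos by exact Hb.
    replace (1 - (- B / K)²) with ((- A / K) * (- A / K)).
    - apply sqrt_square. unfold Rdiv. apply Rmult_le_pos; [lra |].
      left; apply Rinv_0_lt_compat, HK.
    - unfold Rsqr. field_simplify; try lra.
      replace (K ^ 2) with (A * A + B * B) by (rewrite <- HK2; ring). field. nra. }
  pose proof (Hall th (acos_bound _)) as Hth. rewrite Hcos, Hsin in Hth.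
  replace (c + B * (- B / K) + A * (- A / K)) with (c - (A * A + B * B) / K) in Hth
    by (field; lra).
  rewrite <- HK2 in Hth. replace (K * K / K) with K in Hth by (field; lra).
  nra.
Qed.

Lemma two_sinusoids_half_period (h p q r2 A1 B1 A2 B2 : R) :
  0 < p -> 0 < q -> h * h < r2 ->
  (h * p) * (h * p) < A1 * A1 + B1 * B1 -> (h * q) * (h * q) < A2 * A2 + B2 * B2 ->
  A1 * A2 + B1 * B2 = - r2 * p * q ->
  ~ (forall th, 0 <= th <= PI ->
       0 <= h * p + B1 * cos th + A1 * sin th /\ 0 <= h * q + B2 * cos th + A2 * sin th).
Proof.
  intros Hp Hq Hr H1 H2 Hcross Hall. pose proof PI_RGT_0.
  destruct (Hall 0) as [F0 G0]; [lra |]. destruct (Hall PI) as [F1 G1]; [lra |].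
  rewrite cos_0, sin_0 in F0, G0. rewrite cos_PI, sin_PI in F1, G1.
  (* the values at [0] and [PI] bound [B1 * B2] below, which forces [A1 * A2 < 0] *)
  assert (HB : - (h * p) * (h * q) <= B1 * B2).
  { assert (0 <= (h * p - B1) * (h * q - B2)) by (apply Rmult_le_pos; lra).
    assert (0 <= (h * p + B1) * (h * q + B2)) by (apply Rmult_le_pos; lra). nra. }
  assert (HA : A1 * A2 < 0).
  { assert (0 < p * q * (r2 - h * h)) by (apply Rmult_lt_0_compat; nra). nra. }
  destruct (Rlt_or_le A1 0) as [HA1 | HA1].
  - pose proof (sinusoid_nonneg_half_period (h * p) A1 B1 HA1
                  (fun th Hth => proj1 (Hall th Hth))). lra.
  - assert (HA2 : A2 < 0) by nra.
    pose proof (sinusoid_nonneg_half_period (h * q) A2 B2 HA2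
                  (fun th Hth => proj2 (Hall th Hth))). lra.
Qed.

(* [m - (w.m) w] and [w x m] span the plane orthogonal to [w] with equal norms. *)
Lemma rodrigues_gram (w m : vec3) (i j : nat) : dot w w = 1 -> (i < 3)%nat -> (j < 3)%nat ->
  (m i - dot w m * w i) * (m j - dot w m * w j) + cross w m i * cross w m j
  = (dot m m - dot w m * dot w m) * ((if Nat.eqb i j then 1 else 0) - w i * w j).
Proof.
  unfold dot. intros Hw Hi Hj.
  destruct i as [| [| [| i]]]; [..| lia]; (destruct j as [| [| [| j]]]; [..| lia]);
    clear Hi Hj; simpl Nat.eqb; unfold cross; cbv beta iota; nsatz.
Qed.

Lemma rodrigues_half_turn (w m : vec3) (s1 s2 k : R) :
  dot w w = 1 -> s1 * s1 = 1 -> s2 * s2 = 1 ->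
  0 < s1 * w 0%nat -> 0 < s2 * w 1%nat ->
  0 < dot m m -> dot w m * dot w m <= k * dot m m ->
  w 0%nat * w 0%nat <= k -> w 1%nat * w 1%nat <= k -> k < 1 / 2 ->
  ~ (forall th, 0 <= th <= PI ->
       0 <= s1 * rodrigues w m th 0%nat /\ 0 <= s2 * rodrigues w m th 1%nat).
Proof.
  intros Hw Hs1 Hs2 Hp Hq Hm Hh Hk0 Hk1 Hk Hall.
  pose proof (rodrigues_gram w m 0 0 Hw ltac:(lia) ltac:(lia)) as G00.
  pose proof (rodrigues_gram w m 1 1 Hw ltac:(lia) ltac:(lia)) as G11.
  pose proof (rodrigues_gram w m 0 1 Hw ltac:(lia) ltac:(lia)) as G01.
  cbn [Nat.eqb] in G00, G11, G01.
  set (h := dot w m) in *. set (r2 := dot m m - h * h) in *.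
  set (y0 := m 0%nat - h * w 0%nat) in *. set (y1 := m 1%nat - h * w 1%nat) in *.
  set (z0 := cross w m 0%nat) in *. set (z1 := cross w m 1%nat) in *.
  apply (two_sinusoids_half_period h (s1 * w 0%nat) (s2 * w 1%nat) r2
           (s1 * z0) (s1 * y0) (s2 * z1) (s2 * y1)).
  - exact Hp.
  - exact Hq.
  - unfold r2. nra.
  - assert (E : s1 * z0 * (s1 * z0) + s1 * y0 * (s1 * y0) = r2 * (1 - w 0%nat * w 0%nat)).
    { transitivity (s1 * s1 * (y0 * y0 + z0 * z0)); [ring |]. rewrite Hs1, G00. ring. }
    rewrite E. unfold r2. nra.
  - assert (E : s2 * z1 * (s2 * z1) + s2 * y1 * (s2 * y1) = r2 * (1 - w 1%nat * w 1%nat)).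
    { transitivity (s2 * s2 * (y1 * y1 + z1 * z1)); [ring |]. rewrite Hs2, G11. ring. }
    rewrite E. unfold r2. nra.
  - transitivity (s1 * s2 * (y0 * y1 + z0 * z1)); [ring |]. rewrite G01. ring.
  - intros th Hth. destruct (Hall th Hth) as [H0 H1].
    unfold rodrigues in H0, H1. fold h y0 y1 z0 z1 in H0, H1.
    split; [ring_simplify in H0 | ring_simplify in H1]; ring_simplify; lra.
Qed.

Definition axis (a b v1 v2 : R) : vec3 := fun k =>
  match k with
  | 0%nat => v1 * (sin a * sin b)
  | 1%nat => - v2 * (sin a * cos b)
  | _ => cos a
  end.

Lemma matvec_Am (a b v1 v2 : R) (y : vec3) (k : nat) : (k < 3)%nat ->
  matvec (Am a b v1 v2) y k = cross (axis a b v1 v2) y k.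
Proof.
  intros Hk. destruct k as [| [| [| k]]]; [..| lia];
    unfold matvec, Am, Fm, G1m, G2m, cross, axis; cbv beta iota; ring.
Qed.

Lemma rowmat_Am (a b v1 v2 : R) (l : vec3) (k : nat) : (k < 3)%nat ->
  - rowmat l (Am a b v1 v2) k = cross (axis a b v1 v2) l k.
Proof.
  intros Hk. destruct k as [| [| [| k]]]; [..| lia];
    unfold rowmat, Am, Fm, G1m, G2m, cross, axis; cbv beta iota; ring.
Qed.

Lemma Ham_axis (a b : R) (l y : vec3) (lam0 v1 v2 : R) :
  Ham a b l y lam0 v1 v2 = dot (axis a b v1 v2) (cross y l) + lam0.
Proof. unfold Ham, dot, matvec, Fm, G1m, G2m, cross, axis. cbv beta iota. ring. Qed.

Lemma is_sign_sqr (c : R) : is_sign c -> c * c = 1.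
Proof. intros [-> | ->]; ring. Qed.

Lemma axis_planar_sqr (a b v1 v2 : R) : is_sign v1 -> is_sign v2 ->
  axis a b v1 v2 0%nat * axis a b v1 v2 0%nat + axis a b v1 v2 1%nat * axis a b v1 v2 1%nat
  = sin a * sin a.
Proof.
  intros H1 H2. pose proof (is_sign_sqr v1 H1). pose proof (is_sign_sqr v2 H2).
  pose proof (sin2_cos2 b). unfold Rsqr in *. unfold axis. nsatz.
Qed.

Lemma axis_unit (a b v1 v2 : R) : is_sign v1 -> is_sign v2 ->
  dot (axis a b v1 v2) (axis a b v1 v2) = 1.
Proof.
  intros H1 H2. pose proof (axis_planar_sqr a b v1 v2 H1 H2). pose proof (sin2_cos2 a).
  unfold Rsqr in *. unfold dot. replace (axis a b v1 v2 2%nat) with (cos a) by reflexivity.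
  lra.
Qed.

Lemma Ham_max_switching_signs (a b : R) (l y : vec3) (lam0 c1 c2 : R) :
  0 < sin a * sin b -> 0 < sin a * cos b -> is_sign c1 -> is_sign c2 ->
  (forall v1 v2, -1 <= v1 <= 1 -> -1 <= v2 <= 1 ->
     Ham a b l y lam0 v1 v2 <= Ham a b l y lam0 c1 c2) ->
  0 <= c1 * cross y l 0%nat /\ 0 <= - c2 * cross y l 1%nat.
Proof.
  intros HP HQ Hc1 Hc2 Hmax.
  assert (Hlin : forall v1 v2, Ham a b l y lam0 v1 v2 - Ham a b l y lam0 c1 c2
    = (v1 - c1) * (sin a * sin b) * cross y l 0%nat
      - (v2 - c2) * (sin a * cos b) * cross y l 1%nat).
  { intros v1 v2. rewrite !Ham_axis. unfold dot, axis. ring. }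
  pose proof (Hlin (- c1) c2) as E1. pose proof (Hlin c1 (- c2)) as E2.
  assert (B1 : -1 <= - c1 <= 1) by (destruct Hc1 as [-> | ->]; lra).
  assert (B2 : -1 <= - c2 <= 1) by (destruct Hc2 as [-> | ->]; lra).
  assert (B1' : -1 <= c1 <= 1) by lra. assert (B2' : -1 <= c2 <= 1) by lra.
  pose proof (Hmax (- c1) c2 B1 B2') as M1. pose proof (Hmax c1 (- c2) B1' B2) as M2.
  split; nra.
Qed.

Lemma sin_sqr_lt_half (a : R) : 0 < a < PI / 4 -> sin a * sin a < 1 / 2.
Proof.
  intros Ha. pose proof (cos_2a_sin a).
  assert (0 < cos (2 * a)) by (apply cos_gt_0; lra). lra.
Qed.

Lemma axis_coefficients_pos (a b : R) : 0 < a < PI / 4 -> 0 < b <= PI / 4 ->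
  0 < sin a * sin b /\ 0 < sin a * cos b.
Proof.
  intros Ha Hb. pose proof PI_RGT_0.
  split; apply Rmult_lt_0_compat; (apply sin_gt_0 || apply cos_gt_0); lra.
Qed.

Lemma dot_cross_northpole_sqr_le (w l : vec3) :
  dot w (cross northpole l) * dot w (cross northpole l)
  <= (w 0%nat * w 0%nat + w 1%nat * w 1%nat) * dot l l.
Proof.
  unfold dot, cross, northpole. cbv beta iota.
  pose proof (Rle_0_sqr (w 0%nat * l 0%nat + w 1%nat * l 1%nat)).
  pose proof (Rle_0_sqr (l 2%nat)). unfold Rsqr in *. nra.
Qed.

(** * Normal bang-bang extremals *)

Section NormalExtremal.

Variables (a b T lam0 K : R) (x lam : R -> vec3) (u1 u2 : R -> R)
  (n : nat) (tau c1 c2 : nat -> R).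

Hypothesis ha : 0 < a < PI / 4.
Hypothesis hb : 0 < b <= PI / 4.
Hypothesis hpart : bang_bang_partition T u1 u2 n tau c1 c2.
Hypothesis harc : forall i t, (i < n)%nat -> tau i < t < tau (S i) ->
  (forall k, (k < 3)%nat ->
     derivable_pt_lim (fun s => x s k) t (matvec (Am a b (u1 t) (u2 t)) (x t) k)) /\
  (forall k, (k < 3)%nat ->
     derivable_pt_lim (fun s => lam s k) t (- rowmat (lam t) (Am a b (u1 t) (u2 t)) k)) /\
  (forall v1 v2, -1 <= v1 <= 1 -> -1 <= v2 <= 1 ->
     Ham a b (lam t) (x t) lam0 v1 v2 <= Ham a b (lam t) (x t) lam0 (u1 t) (u2 t)) /\
  Ham a b (lam t) (x t) lam0 (u1 t) (u2 t) = 0.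
Hypothesis hx_cont : forall k, (k < 3)%nat -> forall t, 0 <= t <= T ->
  continuity_pt (fun s => x s k) t.
Hypothesis hx_unit : forall t, 0 <= t <= T -> dot (x t) (x t) = 1.
Hypothesis hlam_lip : forall k, (k < 3)%nat -> forall t s, 0 <= t <= T -> 0 <= s <= T ->
  Rabs (lam t k - lam s k) <= K * Rabs (t - s).
Hypothesis hlam_x : forall t, 0 <= t <= T -> dot (lam t) (x t) = 0 /\ vnonzero (lam t).
Hypothesis hx0 : forall k, (k < 3)%nat -> x 0 k = northpole k.

(* [lam] is only controlled on [0,T]; its clamped extension is continuous on all of [R],
   which the arguments starting at time [0] need. *)
Definition lam_ext (t : R) : vec3 := lam (clamp T t).

Definition moment (t : R) : vec3 := cross (x t) (lam_ext t).

Lemma arc_inside (i : nat) (t : R) : (i < n)%nat -> tau i < t < tau (S i) -> 0 < t < T.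
Proof.
  destruct hpart as (_ & Ht0 & HtN & Hinc & _). intros Hi Ht.
  assert (tau 0%nat <= tau i) by (apply (partition_mono n); auto; lia).
  assert (tau (S i) <= tau n) by (apply (partition_mono n); auto; lia).
  lra.
Qed.

Lemma lam_ext_eq (t : R) : 0 <= t <= T -> lam_ext t = lam t.
Proof. intros Ht. unfold lam_ext. now rewrite clamp_id. Qed.

Lemma lam_ext_cont (t : R) : vcont lam_ext t.
Proof.
  destruct hpart as (Hn & Ht0 & HtN & Hinc & _).
  assert (0 <= T) by (rewrite <- Ht0, <- HtN; apply (partition_mono n); auto; lia).
  intros k Hk. apply (lipschitz_clamp_continuous T K (fun s => lam s k)); auto.
Qed.

Lemma moment_cont (t : R) : 0 <= t <= T -> vcont moment t.
Proof. intros Ht. apply vcont_cross; [intros k Hk; now apply hx_cont | apply lam_ext_cont]. Qed.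

Lemma lam_ext_arc (i : nat) (t : R) : (i < n)%nat -> tau i < t < tau (S i) ->
  vderiv lam_ext t (cross (axis a b (c1 i) (c2 i)) (lam_ext t)).
Proof.
  intros Hi Ht k Hk. pose proof (arc_inside i t Hi Ht) as Hin.
  destruct (harc i t Hi Ht) as (_ & Hlam & _).
  destruct hpart as (_ & _ & _ & _ & _ & Hctl). destruct (Hctl i t Hi Ht) as [<- <-].
  rewrite lam_ext_eq, <- rowmat_Am by (lra || exact Hk).
  apply (derivable_pt_lim_locally_ext (fun s => lam s k) _ t 0 T); auto.
  intros z Hz. unfold lam_ext. rewrite clamp_id; [reflexivity | lra].
Qed.

Lemma moment_arc (i : nat) (t : R) : (i < n)%nat -> tau i < t < tau (S i) ->
  vderiv moment t (cross (axis a b (c1 i) (c2 i)) (moment t)) /\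
  dot (axis a b (c1 i) (c2 i)) (moment t) = - lam0 /\
  0 <= c1 i * moment t 0%nat /\ 0 <= - c2 i * moment t 1%nat.
Proof.
  intros Hi Ht. pose proof (arc_inside i t Hi Ht) as Hin.
  destruct (harc i t Hi Ht) as (Hx & _ & Hmax & Hham).
  destruct hpart as (_ & _ & _ & _ & Hsig & Hctl).
  destruct (Hctl i t Hi Ht) as [Hu1 Hu2]. rewrite Hu1, Hu2 in Hx, Hmax, Hham.
  destruct (Hsig i Hi) as [Hs1 Hs2].
  destruct (axis_coefficients_pos a b ha hb) as [HP HQ].
  unfold moment. rewrite (lam_ext_eq t) by lra. split; [| split].
  - eapply vderiv_val.
    + apply (vderiv_cross x lam_ext t (cross (axis a b (c1 i) (c2 i)) (x t)));
        [| exact (lam_ext_arc i t Hi Ht)].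
      intros k Hk. rewrite <- matvec_Am by exact Hk. now apply Hx.
    + intros k Hk. rewrite lam_ext_eq by lra. now apply cross_derivation.
  - rewrite Ham_axis in Hham. lra.
  - now apply (Ham_max_switching_signs a b (lam t) (x t) lam0).
Qed.

Lemma moment_norm (t : R) : 0 <= t <= T ->
  dot (moment t) (moment t) = dot (lam 0) (lam 0).
Proof.
  destruct hpart as (_ & Ht0 & HtN & _). intros Ht.
  assert (Hl : dot (lam_ext t) (lam_ext t) = dot (lam_ext 0) (lam_ext 0)).
  { apply (piecewise_rotation_norm n tau (fun i => axis a b (c1 i) (c2 i)) lam_ext 0 t);
      try lra.
    - intros s Hs. apply lam_ext_cont.
    - intros i s Hi Hs _. now apply lam_ext_arc. }
  rewrite (lam_ext_eq t), (lam_ext_eq 0) in Hl by lra.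
  unfold moment. rewrite lagrange_identity, (lam_ext_eq t), (hx_unit t) by lra.
  destruct (hlam_x t Ht) as [Hlx _].
  replace (dot (x t) (lam t)) with 0 by (rewrite <- Hlx; unfold dot; ring).
  lra.
Qed.

Lemma level_bound : lam0 * lam0 <= sin a * sin a * dot (lam 0) (lam 0).
Proof.
  destruct hpart as (Hn & Ht0 & HtN & Hinc & Hsig & _).
  set (w := axis a b (c1 0%nat) (c2 0%nat)).
  assert (H01 : 0 < tau 1%nat) by (rewrite <- Ht0; apply Hinc, Hn).
  assert (H1T : tau 1%nat <= T) by (rewrite <- HtN; apply (partition_mono n); auto; lia).
  (* the Hamiltonian vanishes on the first arc, hence at time 0 by continuity *)
  assert (Hlev : dot w (moment 0) = - lam0).
  { apply (continuity_pt_eq_right (fun s => dot w (moment s)) 0 (tau 1%nat)); auto.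
    - apply continuity_pt_dot_l, moment_cont. lra.
    - intros z Hz. apply (moment_arc 0 z Hn). lra. }
  assert (E : dot w (moment 0) = dot w (cross northpole (lam 0))).
  { unfold moment. rewrite lam_ext_eq by lra. unfold dot, cross. rewrite !hx0 by lia.
    reflexivity. }
  pose proof (dot_cross_northpole_sqr_le w (lam 0)) as Hb.
  rewrite <- E, Hlev in Hb. unfold w in Hb. rewrite axis_planar_sqr in Hb by apply Hsig, Hn.
  lra.
Qed.

Lemma moment_between_switches (s0 L b1 b2 : R) : 0 <= s0 -> s0 + L <= T ->
  (forall k t, (k < n)%nat -> tau k < t < tau (S k) -> s0 < t < s0 + L ->
     c1 k = b1 /\ c2 k = b2) ->
  forall r, s0 < r < s0 + L ->
  dot (axis a b b1 b2) (moment r) = - lam0 /\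
  0 <= b1 * moment r 0%nat /\ 0 <= - b2 * moment r 1%nat.
Proof.
  intros H0 HL Hctl r Hr. pose proof hpart as (_ & Ht0 & HtN & _).
  assert (Hpw : forall g : R -> R, (forall t, s0 < t < s0 + L -> continuity_pt g t) ->
    (forall i t, (i < n)%nat -> tau i < t < tau (S i) -> s0 < t < s0 + L -> 0 <= g t) ->
    0 <= g r).
  { intros g Hg Harc. apply (piecewise_nonneg n tau g s0 (s0 + L)); auto; lra. }
  assert (Hcont : forall t, s0 < t < s0 + L -> vcont moment t)
    by (intros t Ht; apply moment_cont; lra).
  assert (Harc : forall i t, (i < n)%nat -> tau i < t < tau (S i) -> s0 < t < s0 + L ->
    dot (axis a b b1 b2) (moment t) = - lam0 /\
    0 <= b1 * moment t 0%nat /\ 0 <= - b2 * moment t 1%nat).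
  { intros i t Hi Ht Hst. destruct (Hctl i t Hi Ht Hst) as [<- <-].
    apply (moment_arc i t Hi Ht). }
  assert (Hconst : forall c t, continuity_pt (fun _ : R => c) t)
    by (intros c t; apply continuity_pt_const; now intros ? ?).
  split; [| split].
  - assert (0 <= dot (axis a b b1 b2) (moment r) + lam0).
    { apply (Hpw (fun t => dot (axis a b b1 b2) (moment t) + lam0)).
      - intros t Ht. apply continuity_pt_plus; [apply continuity_pt_dot_l; auto | apply Hconst].
      - intros i t Hi Ht Hst. destruct (Harc i t Hi Ht Hst) as [-> _]. lra. }
    assert (0 <= - (dot (axis a b b1 b2) (moment r) + lam0)).
    { apply (Hpw (fun t => - (dot (axis a b b1 b2) (moment t) + lam0))).
      - intros t Ht. apply continuity_pt_opp, continuity_pt_plus;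
          [apply continuity_pt_dot_l; auto | apply Hconst].
      - intros i t Hi Ht Hst. destruct (Harc i t Hi Ht Hst) as [-> _]. lra. }
    lra.
  - apply (Hpw (fun t => b1 * moment t 0%nat)).
    + intros t Ht. apply continuity_pt_mult; [apply Hconst | apply Hcont; auto].
    + intros i t Hi Ht Hst. apply (Harc i t Hi Ht Hst).
  - apply (Hpw (fun t => - b2 * moment t 1%nat)).
    + intros t Ht. apply continuity_pt_mult; [apply Hconst | apply Hcont; auto].
    + intros i t Hi Ht Hst. apply (Harc i t Hi Ht Hst).
Qed.

Lemma moment_rotation_between_switches (s0 L b1 b2 : R) : is_sign b1 -> is_sign b2 ->
  (forall k t, (k < n)%nat -> tau k < t < tau (S k) -> s0 < t < s0 + L ->
     c1 k = b1 /\ c2 k = b2) ->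
  forall c d, 0 <= s0 < c -> c <= d < s0 + L -> d <= T ->
  forall t, c <= t <= d -> forall k, (k < 3)%nat ->
  moment t k = rodrigues (axis a b b1 b2) (moment c) (t - c) k.
Proof.
  intros Hb1 Hb2 Hctl c d Hc Hd HdT. pose proof hpart as (_ & Ht0 & HtN & _).
  apply (piecewise_rotation_rodrigues n tau (axis a b b1 b2) moment c d); try lra.
  - now apply axis_unit.
  - intros t Ht. apply moment_cont. lra.
  - intros i t Hi Ht Hct. destruct (Hctl i t Hi Ht ltac:(lra)) as [<- <-].
    apply (moment_arc i t Hi Ht).
Qed.

Lemma switching_gap_le_PI (s0 L : R) : 0 < L ->
  switching_time T u1 u2 s0 -> switching_time T u1 u2 (s0 + L) ->
  (forall r, s0 < r < s0 + L -> ~ switching_time T u1 u2 r) -> L <= PI.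
Proof.
  intros HL Hs He Hno.
  destruct (control_constant_between_switches T u1 u2 n tau c1 c2 s0 L hpart Hs Hno)
    as (b1 & b2 & Hb1 & Hb2 & Hctl).
  assert (Hs0 : 0 <= s0) by (destruct Hs as (e & ? & ? & _); lra).
  assert (HsL : s0 + L <= T) by (destruct He as (e & ? & _ & ? & _); lra).
  pose proof (moment_between_switches s0 L b1 b2 Hs0 HsL Hctl) as Hmid.
  apply Rnot_lt_le. intros HPI.
  set (w := axis a b b1 b2). set (c := s0 + (L - PI) / 2).
  (* a switch-free interval longer than PI contains a half turn of the moment *)
  assert (Hrot : forall th, 0 <= th <= PI -> forall k, (k < 3)%nat ->
    moment (c + th) k = rodrigues w (moment c) th k).
  { intros th Hth k Hk. replace th with (c + th - c) at 2 by ring.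
    apply (moment_rotation_between_switches s0 L b1 b2 Hb1 Hb2 Hctl c (c + PI));
      auto; unfold c; lra. }
  assert (Hnorm : dot (moment c) (moment c) = dot (lam 0) (lam 0))
    by (apply moment_norm; unfold c; lra).
  assert (Hlam0 : 0 < dot (lam 0) (lam 0)) by (apply vnonzero_dot_pos, hlam_x; lra).
  pose proof (axis_planar_sqr a b b1 b2 Hb1 Hb2) as Hplanar.
  pose proof (is_sign_sqr b1 Hb1). pose proof (is_sign_sqr b2 Hb2).
  destruct (axis_coefficients_pos a b ha hb) as [HP HQ].
  apply (rodrigues_half_turn w (moment c) b1 (- b2) (sin a * sin a)).
  - now apply axis_unit.
  - assumption.
  - lra.
  - unfold w, axis. nra.
  - unfold w, axis. nra.
  - lra.
  - destruct (Hmid c ltac:(unfold c; lra)) as [Hc _]. fold w in Hc. rewrite Hc, Hnorm.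
    pose proof level_bound. nra.
  - unfold w in *. nra.
  - unfold w in *. nra.
  - now apply sin_sqr_lt_half.
  - intros th Hth. rewrite <- !Hrot by (lia || lra).
    destruct (Hmid (c + th) ltac:(unfold c; lra)) as (_ & Hpos0 & Hpos1). lra.
Qed.

End NormalExtremal.

Lemma consecutive_switching_gap_le_PI (a b : R) (ha : 0 < a < PI / 4) (hb : 0 < b <= PI / 4)
  (T : R) (x : R -> vec3) (u1 u2 : R -> R) (lam : R -> vec3) (lam0 : R)
  (hext : normal_bang_bang_extremal a b T x u1 u2 lam lam0)
  (hx0 : forall k, (k < 3)%nat -> x 0 k = northpole k)
  (s0 L : R) (hL : 0 < L)
  (hs : switching_time T u1 u2 s0) (he : switching_time T u1 u2 (s0 + L))
  (hno : forall r, s0 < r < s0 + L -> ~ switching_time T u1 u2 r) : L <= PI.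
Proof.
  destruct hext as (_ & _ & _ & (n & tau & c1 & c2 & Hpart & Harc) & Hxc & Hxn & (K & HK) & Hlx).
  exact (switching_gap_le_PI a b T lam0 K x lam u1 u2 n tau c1 c2 ha hb Hpart Harc
           Hxc Hxn HK Hlx hx0 s0 L hL hs he hno).
Qed.

Theorem lemma8 (a b : R) (ha : 0 < a < PI / 4) (hb : 0 < b <= PI / 4)
  (T : R) (x : R -> vec3) (u1 u2 : R -> R) (lam : R -> vec3) (lam0 : R)
  (hext : normal_bang_bang_extremal a b T x u1 u2 lam lam0)
  (hx0 : forall k, (k < 3)%nat -> x 0 k = northpole k)
  (s t1 t2 : R) (ht1 : 0 < t1) (ht2 : 0 < t2)
  (hs0 : switching_time T u1 u2 s)
  (hs1 : switching_time T u1 u2 (s + t1))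
  (hs2 : switching_time T u1 u2 (s + t1 + t2))
  (hcons : forall r, s < r < s + t1 + t2 -> r <> s + t1 ->
             ~ switching_time T u1 u2 r) :
  0 <= t1 <= PI /\ 0 <= t2 <= PI.
Proof.
  split; split; try lra.
  - apply (consecutive_switching_gap_le_PI a b ha hb T x u1 u2 lam lam0 hext hx0
             s t1 ht1 hs0 hs1).
    intros r Hr. apply hcons; lra.
  - apply (consecutive_switching_gap_le_PI a b ha hb T x u1 u2 lam lam0 hext hx0
             (s + t1) t2 ht2 hs1 hs2).
    intros r Hr. apply hcons; lra.
Qed.
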